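(* Let $R>0$, $D>0$ and $k\ge0$ an integer. There exists an algorithm $\mathcal A\in\mathfrak A_{\mathrm{lin}}$ such that for every $m\ge1$, every $\mathbf B\in\mathbb R^{m\times m}$ with $\|\mathbf B\|\le R$, and every $\mathbf v=\mathbf B\mathbf z^\star$ with $\|\mathbf z^\star\|\le D$, the iterate $\mathbf z^k$ produced by $\mathcal A$ satisfies $$\|\mathbf B\mathbf z^k-\mathbf v\|^2\le\frac{R^2D^2}{(2\lfloor k/2\rfloor+1)^2}.$$
   Context: $\mathfrak A_{\mathrm{lin}}$ is the class of iterative algorithms for a linear equation $\mathbf B\mathbf z=\mathbf v$ that access $\mathbf B$ only through products with $\mathbf B$ and $\mathbf B^\intercal$, in the sense that $\mathbf z^k\in\mathrm{span}\{\mathbf v^0,\dots,\mathbf v^k\}$, where $\mathbf v^0=0$, $\mathbf v^1=\mathbf v$, and for each $j\ge2$, $\mathbf v^j=\mathbf B\mathbf v^i$ or $\mathbf v^j=\mathbf B^\intercal\mathbf v^i$ for some $i\in\{0,\dots,j-1\}$. $\|\mathbf B\|$ is the spectral norm. *)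

From HB Require Import structures.
From mathcomp Require Import all_boot all_order all_algebra.
From mathcomp Require Import classical_sets reals.
Set Implicit Arguments. Unset Strict Implicit. Unset Printing Implicit Defensive.
Import Order.TTheory GRing.Theory Num.Theory.
Local Open Scope ring_scope.
Local Open Scope classical_set_scope.

Definition vnorm (R : realType) (m : nat) (x : 'cV[R]_m) : R :=
  Num.sqrt (\sum_(i < m) x i 0 ^+ 2).

Definition specnorm (R : realType) (m : nat) (B : 'M[R]_m) : R :=
  sup [set vnorm (B *m x) | x in [set x : 'cV[R]_m | vnorm x <= 1]].

(* An iterative algorithm for B z = v: given the dimension m, the matrix B
   and the right-hand side v, it returns the sequence of iterates z^k. *)
Definition algorithm (R : realType) :=
  forall (m : nat), 'M[R]_m -> 'cV[R]_m -> nat -> 'cV[R]_m.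

Definition in_A_lin (R : realType) (A : algorithm R) : Prop :=
  forall (m : nat) (B : 'M[R]_m) (v : 'cV[R]_m),
    exists vs : nat -> 'cV[R]_m,
      [/\ vs 0%N = 0, vs 1%N = v,
          (forall j : nat, (2 <= j)%N ->
             exists2 i : nat, (i < j)%N &
               vs j = B *m vs i \/ vs j = B^T *m vs i) &
          (forall k : nat, exists c : 'I_k.+1 -> R,
             A m B v k = \sum_(i < k.+1) c i *: vs i)].

From HB Require Import structures.
From mathcomp Require Import all_boot all_order all_algebra.
From mathcomp Require Import classical_sets reals.
From mathcomp Require Import qpoly ring lra zify.
Import Order.TTheory GRing.Theory Num.Theory.
Set Implicit Arguments. Unset Strict Implicit. Unset Printing Implicit Defensive.
Local Open Scope ring_scope.

(* Put C := B / Rad and P := C^T C, and let s_n, c_n be the polynomials with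
   s_n(sin^2 t) = sin((2n+1)t) / sin t and c_n(sin^2 t) = cos((2n+1)t) / cos t,
   so that x s_n(x)^2 + (1 - x) c_n(x)^2 = 1 and s_n(0) = 2n+1.  For n = k/2,
   p := s_n / (2n+1) satisfies p = 1 + x g with deg g < n, and the iterate
   z := - g(P) B^T v / Rad^2 is a combination of the Krylov vectors
   (B^T B)^i B^T v, i < n.  When v = B z*, its residual is
   B z - v = - Rad C p(P) z*.  Evaluating the polynomial identity at P gives
     |C s_n(P) z|^2 = |z|^2 - (|c_n(P) z|^2 - |C c_n(P) z|^2) <= |z|^2,
   because C is a contraction, hence |B z - v| <= Rad |z*| / (2n+1). *)

Section TrigPolys.
Variable R : comNzRingType.

(* The recurrences are the addition formulas for the angle 2t. *)
Fixpoint trig_polys (j : nat) : {poly R} * {poly R} :=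
  if j is j'.+1 then
    let: (s, c) := trig_polys j' in
    ((1 - 'X *+ 2) * s + (1 - 'X) *+ 2 * c, (1 - 'X *+ 2) * c - 'X *+ 2 * s)
  else (1, 1).

Definition sin_poly j := (trig_polys j).1.
Definition cos_poly j := (trig_polys j).2.

Lemma sin_cos_poly_pythagoras j :
  'X * sin_poly j ^+ 2 + (1 - 'X) * cos_poly j ^+ 2 = 1.
Proof.
rewrite /sin_poly /cos_poly; elim: j => [|j IH] /=; first by ring.
by move: IH; case: trig_polys => s c /= IH; rewrite -[RHS]IH; ring.
Qed.

Lemma sin_cos_poly_at0 j :
  (sin_poly j).[0] = (2 * j + 1)%:R /\ (cos_poly j).[0] = 1.
Proof.
rewrite /sin_poly /cos_poly; elim: j => [|j IH] /=; first by rewrite !hornerE.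
move: IH; case: trig_polys => s c /= [s0 c0].
rewrite !(hornerMn, hornerE) s0 c0 !natrD !natrM mulrS; split; ring.
Qed.

Lemma poly_of_size_mul_affine (q p : {poly R}) n :
  q \is a poly_of_size 2 -> p \is a poly_of_size n ->
  q * p \is a poly_of_size n.+1.
Proof.
rewrite !qualifE /= => q2 pn; apply: leq_trans (size_mul_leq _ _) _.
by move: (size p) (size q) q2 pn => a b; lia.
Qed.

Lemma size_sin_cos_poly j :
  sin_poly j \is a poly_of_size j.+1 /\ cos_poly j \is a poly_of_size j.+1.
Proof.
rewrite /sin_poly /cos_poly; elim: j => [|j IH] /=.
  by rewrite qualifE /= size_poly1.
move: IH; case: trig_polys => s c /= [sj cj].
have X_of_size2 : 'X \is a @poly_of_size R 2 by rewrite qualifE /= size_polyX.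
have one_of_size2 : 1 \is a @poly_of_size R 2 by rewrite qualifE /= size_poly1.
by split; rewrite ?(rpredB, rpredD, rpredMn) //;
  rewrite poly_of_size_mul_affine ?(rpredB, rpredD, rpredMn).
Qed.

End TrigPolys.

Section Norms.
Variables (R : realType) (m : nat).
Implicit Types (x : 'cV[R]_m) (B : 'M[R]_m).

Lemma vnorm_ge0 x : 0 <= vnorm x.
Proof. exact: sqrtr_ge0. Qed.

Lemma vnorm_sqr x : vnorm x ^+ 2 = (x^T *m x) 0 0.
Proof.
rewrite sqr_sqrtr ?sumr_ge0 // => [|i _]; last exact: sqr_ge0.
by rewrite mxE; apply: eq_bigr => i _; rewrite mxE expr2.
Qed.

Lemma vnorm_sqr_gram B x : vnorm (B *m x) ^+ 2 = (x^T *m (B^T *m B) *m x) 0 0.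
Proof. by rewrite vnorm_sqr trmx_mul !mulmxA. Qed.

Lemma vnormZ a x : vnorm (a *: x) = `|a| * vnorm x.
Proof.
rewrite /vnorm -sqrtr_sqr -sqrtrM ?sqr_ge0 // mulr_sumr.
by congr Num.sqrt; apply: eq_bigr => i _; rewrite mxE exprMn.
Qed.

Lemma vnorm0 : vnorm (0 : 'cV[R]_m) = 0.
Proof. by rewrite -(scale0r 0) vnormZ normr0 mul0r. Qed.

Lemma vnorm_eq0 x : vnorm x = 0 -> x = 0.
Proof.
move=> /(congr1 (fun r => r ^+ 2)); rewrite expr0n /= sqr_sqrtr; last first.
  by rewrite sumr_ge0 // => i _; rewrite sqr_ge0.
move/eqP; rewrite psumr_eq0 => [/allP x0|i _]; last exact: sqr_ge0.
apply/matrixP => i j; rewrite ord1 mxE.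
by have /implyP/(_ isT) := x0 i (mem_index_enum i); rewrite sqrf_eq0 => /eqP.
Qed.

Lemma normr_coord_le_vnorm x i : `|x i 0| <= vnorm x.
Proof.
rewrite -sqrtr_sqr ler_sqrt; last by rewrite sumr_ge0 // => j _; rewrite sqr_ge0.
by rewrite (bigD1 i) //= lerDl sumr_ge0 // => j _; rewrite sqr_ge0.
Qed.

Lemma specnorm_has_sup B :
  has_sup [set vnorm (B *m x) | x in [set x : 'cV[R]_m | vnorm x <= 1]].
Proof.
split; first by exists (vnorm (B *m 0)), 0; rewrite //= vnorm0.
pose b i := \sum_(j < m) `|B i j|.
exists (Num.sqrt (\sum_(i < m) b i ^+ 2)) => _ [x /= x1 <-].
rewrite /vnorm ler_sqrt ?sumr_ge0 // => [|i _]; last exact: sqr_ge0.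
apply: ler_sum => i _; rewrite -[_ ^+ 2]ger0_norm ?sqr_ge0 // normrX mxE.
rewrite lerXn2r ?nnegrE ?sumr_ge0 //.
apply: le_trans (ler_norm_sum _ _ _) _; apply: ler_sum => j _.
by rewrite normrM ler_piMr // (le_trans (normr_coord_le_vnorm _ _)).
Qed.

Lemma vnorm_mulmx_le B x : vnorm (B *m x) <= specnorm B * vnorm x.
Proof.
have [->|x_neq0] := eqVneq x 0; first by rewrite mulmx0 vnorm0 mulr0.
have x_gt0 : 0 < vnorm x.
  by rewrite lt_def vnorm_ge0 andbT; apply: contra_neq x_neq0 => /vnorm_eq0.
have unit_x : vnorm ((vnorm x)^-1 *: x) <= 1.
  by rewrite vnormZ gtr0_norm ?invr_gt0 // mulVf ?gt_eqF.
have : vnorm (B *m ((vnorm x)^-1 *: x)) <= specnorm B.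
  by apply: (sup_upper_bound (specnorm_has_sup B)); exists ((vnorm x)^-1 *: x).
by rewrite -scalemxAr vnormZ gtr0_norm ?invr_gt0 // ler_pdivrMl // mulrC.
Qed.

End Norms.

Lemma trmx_horner (R : comNzRingType) n (A : 'M[R]_n.+1) p :
  (horner_mx A p)^T = horner_mx A^T p.
Proof.
elim/poly_ind: p => [|p c IH]; first by rewrite !rmorph0 trmx0.
rewrite !(rmorphD, rmorphM) /= !horner_mx_X !horner_mx_C linearD /= tr_scalar_mx.
by rewrite -mulmxE trmx_mul IH; congr (_ + _); apply: comm_mx_horner.
Qed.

Lemma horner_mx_sum (R : comNzRingType) n (A : 'M[R]_n.+1) p k :
  p \is a poly_of_size k -> horner_mx A p = \sum_(i < k) p`_i *: A ^+ i.
Proof.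
rewrite qualifE /= => pk.
have {1}-> : p = \sum_(i < k) p`_i *: 'X^i.
  rewrite -poly_def; apply/polyP => i; rewrite coef_poly.
  by case: ltnP => // ki; rewrite nth_default // (leq_trans pk ki).
rewrite rmorph_sum; apply: eq_bigr => i _.
rewrite -mul_polyC rmorphM /= horner_mx_C rmorphXn /= horner_mx_X.
by rewrite -mulmxE mul_scalar_mx.
Qed.

Lemma horner_gram_contraction (R : realType) m (C : 'M[R]_m.+1)
    (a u : {poly R}) z :
  (forall y, vnorm (C *m y) <= vnorm y) ->
  'X * a ^+ 2 + (1 - 'X) * u ^+ 2 = 1 ->
  vnorm (C *m horner_mx (C^T *m C) a *m z) <= vnorm z.
Proof.
move=> C_contraction pyth; set P := C^T *m C.
have P_sym : P^T = P by rewrite /P trmx_mul trmxK.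
set A := horner_mx P a; set U := horner_mx P u.
have A_sym : A^T = A by rewrite trmx_horner P_sym.
have U_sym : U^T = U by rewrite trmx_horner P_sym.
have comm_P M : comm_mx P (horner_mx P M) by apply: comm_mx_horner.
have gram_split :
    (C *m A)^T *m (C *m A) + (U^T *m U - (C *m U)^T *m (C *m U)) = 1.
  have /(congr1 (horner_mx P)) := pyth.
  rewrite !(rmorphD, rmorphM, rmorphB, rmorphN, rmorphXn) !rmorph1 /=.
  rewrite horner_mx_X -/A -/U.
  move=> <-; rewrite !trmx_mul A_sym U_sym -!mulmxE !mulmxA.
  rewrite -[A *m C^T *m C]mulmxA -[U *m C^T *m C]mulmxA -/P.
  by rewrite -(comm_P a) -(comm_P u) -/A -/U !mulmxBl !mul1mx.
have := congr1 (fun M => (z^T *m M *m z) 0 0) gram_split.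
rewrite /= mulmxDr mulmxBr mulmxDl mulmxBl mulmx1 -vnorm_sqr.
rewrite [LHS]mxE [X in _ + X = _]mxE [X in _ + (_ + X) = _]mxE.
rewrite -!vnorm_sqr_gram => norm_split.
have CU_le : vnorm (C *m U *m z) ^+ 2 <= vnorm (U *m z) ^+ 2.
  by rewrite -mulmxA lerXn2r ?nnegrE ?vnorm_ge0 ?C_contraction.
by rewrite -(@ler_pXn2r _ 2) ?nnegrE ?vnorm_ge0 //; lra.
Qed.

Section Krylov.
Variables (R : nzRingType) (m : nat) (B : 'M[R]_m) (v : 'cV[R]_m).

Fixpoint krylov (j : nat) : 'cV[R]_m :=
  match j with
  | 0 => 0
  | 1 => v
  | (j'.+1 as j1).+1 => (if odd j' then B else B^T) *m krylov j1
  end.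

Lemma krylovSS j : krylov j.+2 = (if odd j then B else B^T) *m krylov j.+1.
Proof. by []. Qed.

Lemma krylov_step j :
  (1 < j)%N -> krylov j = B *m krylov j.-1 \/ krylov j = B^T *m krylov j.-1.
Proof.
by case: j => [|[|j]] // _; rewrite krylovSS; case: odd; [left | right].
Qed.

Lemma krylov_even i : krylov (2 * i).+2 = (B^T *m B) ^+ i *m (B^T *m v).
Proof.
elim: i => [|i IH]; first by rewrite expr0 mul1mx.
rewrite mulnS !addSn add0n krylovSS krylovSS IH /= mul2n odd_double /=.
by rewrite exprS -mulmxE !mulmxA.
Qed.

End Krylov.

Section PrefixSpan.
Variables (R : nzRingType) (V : lmodType R) (f : nat -> V).

Definition in_prefix_span (k : nat) (x : V) :=
  exists c : 'I_k.+1 -> R, x = \sum_(i < k.+1) c i *: f i.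

Lemma prefix_span0 k : in_prefix_span k 0.
Proof. by exists (fun=> 0); rewrite big1 // => i _; rewrite scale0r. Qed.

Lemma prefix_spanD k x y :
  in_prefix_span k x -> in_prefix_span k y -> in_prefix_span k (x + y).
Proof.
move=> [c ->] [d ->]; exists (fun i => c i + d i).
by rewrite -big_split; apply: eq_bigr => i _; rewrite scalerDl.
Qed.

Lemma prefix_span_scale k a j : (j <= k)%N -> in_prefix_span k (a *: f j).
Proof.
move=> jk; exists (fun i : 'I_k.+1 => if val i == j then a else 0).
rewrite (bigD1 (Ordinal (jk : j < k.+1)%N)) //= eqxx big1 ?addr0 // => i.
by rewrite -val_eqE /= => /negbTE ->; rewrite scale0r.
Qed.

End PrefixSpan.

Lemma krylov_gram_residual (R : fieldType) (Rad : R) m (C : 'M[R]_m.+1)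
    (g : {poly R}) n z :
  Rad != 0 -> g \is a poly_of_size n ->
  (Rad *: C) *m (\sum_(i < n) (- g`_i / Rad ^+ (2 * i + 2)) *:
     krylov (Rad *: C) ((Rad *: C) *m z) (2 * i).+2) - (Rad *: C) *m z
  = - Rad *: (C *m horner_mx (C^T *m C) (1 + g * 'X) *m z).
Proof.
move=> Rad_neq0 gn; set P := C^T *m C.
have gram : (Rad *: C)^T *m (Rad *: C) = Rad ^+ 2 *: P.
  by rewrite -scalemxAr [(_ *: C)^T]linearZ /= -scalemxAl scalerA -expr2.
have iterate : \sum_(i < n) (- g`_i / Rad ^+ (2 * i + 2)) *:
    krylov (Rad *: C) ((Rad *: C) *m z) (2 * i).+2 = - (horner_mx P g *m P *m z).
  rewrite (horner_mx_sum _ gn) !mulmx_suml -sumrN; apply: eq_bigr => i _.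
  rewrite krylov_even [(Rad *: C)^T *m (_ *m z)]mulmxA gram exprZn -!scalemxAl.
  rewrite -scalemxAr !scalerA mulmxA -scaleNr; congr (_ *: _).
  by rewrite -exprM -mulrA -exprD divfK // expf_neq0.
rewrite iterate rmorphD rmorph1 rmorphM /= horner_mx_X -mulmxE.
rewrite mulmxDr mulmx1 mulmxDl mulmxN -!scalemxAl !mulmxA.
by rewrite scaleNr scalerDr opprD addrC.
Qed.

Section ChebyshevIteration.
Variable R : numFieldType.

Definition cheb_update n : {poly R} :=
  drop_poly 1 (((2 * n + 1)%:R)^-1 *: sin_poly R n).

Lemma size_cheb_update n : cheb_update n \is a poly_of_size n.
Proof.
rewrite qualifE /= size_drop_poly leq_subLR add1n.
exact: leq_trans (size_scale_leq _ _) (proj1 (size_sin_cos_poly R n)).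
Qed.

Lemma cheb_updateE n :
  1 + cheb_update n * 'X = ((2 * n + 1)%:R)^-1 *: sin_poly R n.
Proof.
rewrite -[RHS](poly_take_drop 1) expr1; congr (_ + _).
rewrite (size1_polyC (size_take_poly _ _)) coef_take_poly /= -horner_coef0.
by rewrite hornerZ (proj1 (sin_cos_poly_at0 R n)) mulVf // pnatr_eq0 addn1.
Qed.

(* - g(P) B^T v / Rad^2 for g := cheb_update n and P := B^T B / Rad^2,
   expanded over the vectors krylov B v (2 i).+2 = (B^T B)^i B^T v. *)
Definition cheb_iterate (Rad : R) n m (B : 'M[R]_m) (v : 'cV[R]_m) : 'cV[R]_m :=
  \sum_(i < n) (- (cheb_update n)`_i / Rad ^+ (2 * i + 2)) *: krylov B v (2 * i).+2.

End ChebyshevIteration.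

Definition cheb_algorithm (R : realType) (Rad : R) : algorithm R :=
  fun m B v k => cheb_iterate Rad k./2 B v.

Lemma cheb_algorithm_in_A_lin (R : realType) (Rad : R) :
  in_A_lin (cheb_algorithm Rad).
Proof.
move=> m B v; exists (krylov B v); split => //.
  by move=> j j_gt1; exists j.-1; [rewrite prednK // ltnW | exact: krylov_step].
move=> k; apply: (big_ind (in_prefix_span (krylov B v) k)).
- exact: prefix_span0.
- exact: prefix_spanD.
move=> i _; apply: prefix_span_scale.
move: (nat_of_ord i) (ltn_ord i) (odd_double_half k) => j + {i}.
by rewrite -mul2n; move: (odd k) (k./2) => [] h /=; lia.
Qed.

Lemma cheb_residual_le (R : realType) (Rad : R) n m (B : 'M[R]_m.+1) zs :
  0 < Rad -> specnorm B <= Rad ->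
  vnorm (B *m cheb_iterate Rad n B (B *m zs) - B *m zs)
    <= Rad / (2 * n + 1)%:R * vnorm zs.
Proof.
move=> Rad_gt0 B_le; have Rad_ge0 := ltW Rad_gt0; set C := Rad^-1 *: B.
have -> : B = Rad *: C by rewrite scalerA divff ?gt_eqF // scale1r.
have C_contraction y : vnorm (C *m y) <= vnorm y.
  rewrite -scalemxAl vnormZ ger0_norm ?invr_ge0 ?Rad_ge0 // ler_pdivrMl //.
  by rewrite (le_trans (vnorm_mulmx_le _ _)) // ler_wpM2r ?vnorm_ge0.
rewrite krylov_gram_residual ?gt_eqF ?size_cheb_update // cheb_updateE linearZ /=.
rewrite -scalemxAr -scalemxAl scalerA vnormZ normrM normrN !ger0_norm ?invr_ge0 //.
rewrite ler_wpM2l ?divr_ge0 //.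
exact: horner_gram_contraction C_contraction (sin_cos_poly_pythagoras _ n).
Qed.

Theorem lemma4 (R : realType) (Rad Dia : R) (k : nat) :
  0 < Rad -> 0 < Dia ->
  exists A : algorithm R, in_A_lin A /\
    forall (m : nat) (B : 'M[R]_m) (zstar v : 'cV[R]_m),
      (1 <= m)%N ->
      specnorm B <= Rad ->
      v = B *m zstar ->
      vnorm zstar <= Dia ->
      vnorm (B *m A m B v k - v) ^+ 2
        <= Rad ^+ 2 * Dia ^+ 2 / ((2 * k./2 + 1)%:R) ^+ 2.
Proof.
move=> Rad_gt0 Dia_gt0; exists (cheb_algorithm Rad).
split; first exact: cheb_algorithm_in_A_lin.
move=> [//|m] B zs _ _ B_le -> zs_le.
apply: le_trans (lerXn2r _ _ _ (cheb_residual_le k./2 zs Rad_gt0 B_le)) _.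
- by rewrite nnegrE vnorm_ge0.
- by rewrite nnegrE mulr_ge0 ?vnorm_ge0 ?divr_ge0 ?(ltW Rad_gt0) ?ler0n.
rewrite exprMn expr_div_n mulrAC ler_wpM2r ?invr_ge0 ?exprn_ge0 ?ler0n //.
by rewrite ler_wpM2l ?sqr_ge0 // lerXn2r ?nnegrE ?vnorm_ge0 ?(ltW Dia_gt0).
Qed.
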